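(* Let $(V,L,\varphi,E)$ be a valuation system. Then $\varphi$ is $\Pi$-extendible if and only if for every $b\in L$ and every $\varphi$-convergent sequence $a_1\ge a_2\ge\cdots$ in $L$, $$\textstyle\bigwedge_n a_n\le b \quad\Longrightarrow\quad \bigwedge_n\varphi(a_n)\le\varphi(b).$$
   Context: A valuation system $(V,L,\varphi,E)$ consists of: (i) a lattice $V$ which is $\sigma$-distributive, i.e. for every $a\in V$ and every sequence $(b_n)$ in $V$ whose infimum exists, $\bigwedge_n(a\vee b_n)$ exists and equals $a\vee\bigwedge_n b_n$, and dually for suprema; (ii) a sublattice $L$ of $V$; (iii) a partially ordered abelian group $E$ which is R-complete: whenever $x_1\ge x_2\ge\cdots$ and $y_1\ge y_2\ge\cdots$ in $E$ are such that $\bigwedge_n(x_n+y_n)$ exists, then $\bigwedge_n x_n$ and $\bigwedge_n y_n$ exist, and dually for increasing sequences and suprema; (iv) a valuation $\varphi:L\to E$, i.e. an order-preserving map with $\varphi(a\wedge b)+\varphi(a\vee b)=\varphi(a)+\varphi(b)$. A decreasing sequence $a_1\ge a_2\ge\cdots$ in $L$ is $\varphi$-convergent if $\bigwedge_n a_n$ exists in $V$ and $\bigwedge_n\varphi(a_n)$ exists in $E$. Let $\Pi L:=\{\bigwedge_n a_n: (a_n)\text{ a }\varphi\text{-convergent decreasing sequence in }L\}$ (a sublattice of $V$). $\varphi$ is $\Pi$-extendible if there is a valuation $\Pi\varphi:\Pi L\to E$ with $\Pi\varphi(\bigwedge_n a_n)=\bigwedge_n\varphi(a_n)$ for every $\varphi$-convergent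 decreasing sequence $(a_n)$ in $L$. *)

From HB Require Import structures.
From mathcomp Require Import all_boot all_order all_algebra.
Set Implicit Arguments. Unset Strict Implicit. Unset Printing Implicit Defensive.
Import Order.Theory GRing.Theory.
Local Open Scope order_scope.

Definition is_inf {d} {T : porderType d} (f : nat -> T) (x : T) : Prop :=
  (forall n, x <= f n) /\ (forall y, (forall n, y <= f n) -> y <= x).

Definition is_sup {d} {T : porderType d} (f : nat -> T) (x : T) : Prop :=
  (forall n, f n <= x) /\ (forall y, (forall n, f n <= y) -> x <= y).

Definition decreasing_seq {d} {T : porderType d} (f : nat -> T) : Prop :=
  forall n, f n.+1 <= f n.
Definition increasing_seq {d} {T : porderType d} (f : nat -> T) : Prop :=
  forall n, f n <= f n.+1.

Definition sigma_distributive {d} (V : latticeType d) : Prop :=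
  (forall (a : V) (b : nat -> V) (m : V), is_inf b m ->
      is_inf (fun n => a `|` b n) (a `|` m)) /\
  (forall (a : V) (b : nat -> V) (m : V), is_sup b m ->
      is_sup (fun n => a `&` b n) (a `&` m)).

Definition sublattice {d} {V : latticeType d} (L : V -> Prop) : Prop :=
  forall a b, L a -> L b -> L (a `&` b) /\ L (a `|` b).

Definition pogroup_axiom (E : porderZmodType) : Prop :=
  forall x y z : E, x <= y -> (x + z)%R <= (y + z)%R.

Definition R_complete (E : porderZmodType) : Prop :=
  (forall x y : nat -> E, decreasing_seq x -> decreasing_seq y ->
     (exists s, is_inf (fun n => (x n + y n)%R) s) ->
     (exists s, is_inf x s) /\ (exists s, is_inf y s)) /\
  (forall x y : nat -> E, increasing_seq x -> increasing_seq y ->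
     (exists s, is_sup (fun n => (x n + y n)%R) s) ->
     (exists s, is_sup x s) /\ (exists s, is_sup y s)).

Definition valuation_on {d} {V : latticeType d} {E : porderZmodType}
  (S : V -> Prop) (phi : V -> E) : Prop :=
  (forall a b, S a -> S b -> a <= b -> phi a <= phi b) /\
  (forall a b, S a -> S b -> (phi (a `&` b) + phi (a `|` b) = phi a + phi b)%R).

Definition valuation_system {d} (V : latticeType d) (L : V -> Prop)
  (E : porderZmodType) (phi : V -> E) : Prop :=
  [/\ sigma_distributive V, sublattice L, pogroup_axiom E, R_complete E
    & valuation_on L phi].

Arguments valuation_system {d} V L E phi.

Definition phi_convergent {d} {V : latticeType d} {E : porderZmodType}
  (L : V -> Prop) (phi : V -> E) (a : nat -> V) : Prop :=
  [/\ (forall n, L (a n)), decreasing_seq a,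
      (exists x, is_inf a x) & (exists y, is_inf (fun n => phi (a n)) y)].

Definition PiL {d} {V : latticeType d} {E : porderZmodType}
  (L : V -> Prop) (phi : V -> E) (x : V) : Prop :=
  exists a, phi_convergent L phi a /\ is_inf a x.

Definition Pi_extendible {d} {V : latticeType d} {E : porderZmodType}
  (L : V -> Prop) (phi : V -> E) : Prop :=
  exists psi : V -> E, (valuation_on (PiL L phi) psi) /\
    (forall (a : nat -> V) (x : V) (y : E), phi_convergent L phi a ->
      is_inf a x -> is_inf (fun n => phi (a n)) y -> psi x = y).

(* If the condition holds, any two phi-convergent sequences with the same
   infimum have the same infimum of values (apply the condition to each term
   of one sequence), so Pi phi is well defined by choosing one such sequence.
   Monotonicity of Pi phi is the condition again; modularity follows by taking
   meets and joins termwise: sigma-distributivity computes the infima of the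
   new sequences, R-completeness provides the infima of their values, and
   these add up to the infima for the original sequences. *)
From mathcomp Require Import all_boot all_order all_algebra.
From Stdlib Require Import ClassicalEpsilon.
Import Order.Theory GRing.Theory.
Local Open Scope order_scope.

Section Infimum.
Context {disp : Order.disp_t} {T : porderType disp}.

Lemma is_inf_unique {f : nat -> T} {x x' : T} : is_inf f x -> is_inf f x' -> x = x'.
Proof. by move=> [fx infx] [fx' infx']; apply/le_anti; rewrite infx' ?infx. Qed.

Lemma is_inf_cst (c : T) : is_inf (fun=> c) c.
Proof. by split=> [//|z /(_ 0%N)]. Qed.

Lemma eq_is_inf {f g : nat -> T} {x : T} : f =1 g -> is_inf f x -> is_inf g x.
Proof.
move=> fg [fx infx]; split=> [n|z zg]; first by rewrite -fg.
by apply: infx => n; rewrite fg.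
Qed.

Lemma decreasing_seq_le (f : nat -> T) :
  decreasing_seq f -> forall m n : nat, (m <= n)%N -> f n <= f m.
Proof. by move=> df m n; apply: Order.NatMonotonyTheory.nonincnP. Qed.

Arguments decreasing_seq_le {f} df {m n}.

Lemma lb_decreasing_cross {disp' : Order.disp_t} {U : porderType disp'}
    (op : T -> T -> U) (a b : nat -> T) z :
  (forall x y x' y', x <= x' -> y <= y' -> op x y <= op x' y') ->
  decreasing_seq a -> decreasing_seq b ->
  (forall n, z <= op (a n) (b n)) -> forall m n, z <= op (a m) (b n).
Proof.
move=> op_le da db zab m n; have [mn | nm] := leqP m n.
  exact: le_trans (zab n) (op_le _ _ _ _ (decreasing_seq_le da mn) (lexx _)).
exact: le_trans (zab m) (op_le _ _ _ _ (lexx _) (decreasing_seq_le db (ltnW nm))).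
Qed.

End Infimum.

Arguments lb_decreasing_cross {disp T disp' U op a b z}.

Lemma is_infI {disp} {V : latticeType disp} {a b : nat -> V} {x y : V} :
  is_inf a x -> is_inf b y -> is_inf (fun n => a n `&` b n) (x `&` y).
Proof.
move=> [lbx infx] [lby infy]; split=> [n|z zab]; first exact: leI2 (lbx n) (lby n).
rewrite lexI; apply/andP; split; [apply: infx | apply: infy] => n;
  apply: le_trans (zab n) _; [exact: leIl | exact: leIr].
Qed.

Lemma is_infU {disp} {V : latticeType disp} {a b : nat -> V} {x y : V} :
  sigma_distributive V -> decreasing_seq a -> decreasing_seq b ->
  is_inf a x -> is_inf b y -> is_inf (fun n => a n `|` b n) (x `|` y).
Proof.
move=> [sdU _] da db ia ib; split=> [n|z zab]; first exact: leU2 (ia.1 n) (ib.1 n).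
have z_cross := lb_decreasing_cross leU2 da db zab.
have zya m : z <= y `|` a m.
  by rewrite joinC; apply: (sdU _ _ _ ib).2 => n; apply: z_cross.
by rewrite joinC; apply: (sdU _ _ _ ia).2 zya.
Qed.

Section PartiallyOrderedGroup.
Context {E : porderZmodType} (pg : pogroup_axiom E).

Lemma pogroup_leD (x y x' y' : E) : x <= x' -> y <= y' -> (x + y)%R <= (x' + y')%R.
Proof.
move=> xx' yy'; apply: le_trans (pg _ _ y xx') _.
by rewrite !(addrC x'); apply: pg.
Qed.

Lemma pogroup_leBlDl (x y z : E) : ((z - x)%R <= y) <-> (z <= x + y)%R.
Proof.
split=> [/(pg _ _ x) | /(pg _ _ (- x)%R)]; first by rewrite addrNK addrC.
by rewrite (addrC x) addrK.
Qed.

Lemma is_infD {x y : nat -> E} {X Y : E} :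
  decreasing_seq x -> decreasing_seq y -> is_inf x X -> is_inf y Y ->
  is_inf (fun n => (x n + y n)%R) (X + Y)%R.
Proof.
move=> dx dy ix iy; split=> [n|z zxy]; first exact: pogroup_leD (ix.1 n) (iy.1 n).
have z_cross := lb_decreasing_cross pogroup_leD dx dy zxy.
have zxY n : (z <= x n + Y)%R.
  by apply/pogroup_leBlDl; apply: iy.2 => m; apply/pogroup_leBlDl; apply: z_cross.
rewrite addrC; apply/pogroup_leBlDl; apply: ix.2 => n.
by apply/pogroup_leBlDl; rewrite addrC; apply: zxY.
Qed.

End PartiallyOrderedGroup.

Section PiExtension.
Variables (disp : Order.disp_t) (V : latticeType disp) (L : V -> Prop).
Variables (E : porderZmodType) (phi : V -> E).

Lemma phi_convergent_cst {b : V} : L b -> phi_convergent L phi (fun=> b).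
Proof.
by move=> Lb; split=> //; [exists b | exists (phi b)]; apply: is_inf_cst.
Qed.

Lemma Pi_extendible_inf_le : Pi_extendible L phi ->
  forall (b : V) (a : nat -> V) (x : V) (y : E),
    L b -> phi_convergent L phi a -> is_inf a x ->
    is_inf (fun n => phi (a n)) y -> x <= b -> y <= phi b.
Proof.
move=> [psi [[psi_le _] psiE]] b a x y Lb ca ia iy xb.
have cb := phi_convergent_cst Lb.
rewrite -(psiE _ _ _ ca ia iy) -(psiE _ _ _ cb (is_inf_cst b) (is_inf_cst _)).
by apply: psi_le => //; [exists a | exists (fun=> b); split=> //; apply: is_inf_cst].
Qed.

Hypothesis sd : sigma_distributive V.
Hypothesis sl : sublattice L.
Hypothesis pg : pogroup_axiom E.
Hypothesis rc : R_complete E.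
Hypothesis phi_le : forall a b, L a -> L b -> a <= b -> phi a <= phi b.
Hypothesis phi_modular : forall a b, L a -> L b ->
  (phi (a `&` b) + phi (a `|` b) = phi a + phi b)%R.
Hypothesis inf_le : forall (b : V) (a : nat -> V) (x : V) (y : E),
  L b -> phi_convergent L phi a -> is_inf a x ->
  is_inf (fun n => phi (a n)) y -> x <= b -> y <= phi b.

Lemma decreasing_phi {a : nat -> V} :
  (forall n, L (a n)) -> decreasing_seq a -> decreasing_seq (fun n => phi (a n)).
Proof. by move=> La da n; apply: phi_le. Qed.

Lemma inf_phi_le {a b : nat -> V} {x x' : V} {y y' : E} :
  phi_convergent L phi a -> phi_convergent L phi b ->
  is_inf a x -> is_inf b x' -> is_inf (fun n => phi (a n)) y ->
  is_inf (fun n => phi (b n)) y' -> x <= x' -> y <= y'.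
Proof.
move=> ca [Lb _ _ _] ia ib iy iy' xx'; apply: iy'.2 => n.
exact: inf_le ca ia iy (le_trans xx' (ib.1 n)).
Qed.

Definition is_Pi_value (x : V) (y : E) : Prop :=
  exists a, [/\ phi_convergent L phi a, is_inf a x & is_inf (fun n => phi (a n)) y].

Definition Pi_phi (x : V) : E := epsilon (inhabits 0%R) (is_Pi_value x).

Lemma Pi_phiE {a : nat -> V} {x : V} {y : E} : phi_convergent L phi a -> is_inf a x ->
  is_inf (fun n => phi (a n)) y -> Pi_phi x = y.
Proof.
move=> ca ia iy.
have [b [cb ib iy']] : is_Pi_value x (Pi_phi x).
  by apply: epsilon_spec; exists y, a.
apply/le_anti/andP; split.
  exact: inf_phi_le cb ca ib ia iy' iy (lexx x).
exact: inf_phi_le ca cb ia ib iy iy' (lexx x).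
Qed.

Lemma Pi_phi_le x x' : PiL L phi x -> PiL L phi x' -> x <= x' -> Pi_phi x <= Pi_phi x'.
Proof.
move=> [a [ca ia]] [b [cb ib]] xx'.
have [_ _ _ [y iy]] := ca; have [_ _ _ [y' iy']] := cb.
by rewrite (Pi_phiE ca ia iy) (Pi_phiE cb ib iy'); apply: inf_phi_le ia ib iy iy' xx'.
Qed.

Lemma Pi_phi_modular x x' : PiL L phi x -> PiL L phi x' ->
  (Pi_phi (x `&` x') + Pi_phi (x `|` x') = Pi_phi x + Pi_phi x')%R.
Proof.
move=> [a [ca ia]] [b [cb ib]].
have [La da _ [y iy]] := ca; have [Lb db _ [y' iy']] := cb.
pose m n := a n `&` b n; pose j n := a n `|` b n.
have Lm n : L (m n) by exact: (sl _ _ (La n) (Lb n)).1.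
have Lj n : L (j n) by exact: (sl _ _ (La n) (Lb n)).2.
have dm : decreasing_seq m by move=> n; apply: leI2.
have dj : decreasing_seq j by move=> n; apply: leU2.
have isum : is_inf (fun n => phi (m n) + phi (j n))%R (y + y')%R.
  apply: eq_is_inf _ (is_infD pg (decreasing_phi La da) (decreasing_phi Lb db) iy iy').
  by move=> n; rewrite phi_modular.
have [[u iu] [v iv]] :=
  rc.1 _ _ (decreasing_phi Lm dm) (decreasing_phi Lj dj) (ex_intro _ _ isum).
have im := is_infI ia ib; have ij := is_infU sd da db ia ib.
have cm : phi_convergent L phi m by split=> //; [exists (x `&` x') | exists u].
have cj : phi_convergent L phi j by split=> //; [exists (x `|` x') | exists v].
rewrite (Pi_phiE cm im iu) (Pi_phiE cj ij iv) (Pi_phiE ca ia iy) (Pi_phiE cb ib iy').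
have iuv := is_infD pg (decreasing_phi Lm dm) (decreasing_phi Lj dj) iu iv.
exact: is_inf_unique iuv isum.
Qed.

Lemma Pi_extendible_of_inf_le : Pi_extendible L phi.
Proof.
exists Pi_phi; split; last exact: @Pi_phiE.
by split; [exact: Pi_phi_le | exact: Pi_phi_modular].
Qed.

End PiExtension.

Theorem lemma5p7 (d : Order.disp_t) (V : latticeType d) (L : V -> Prop)
  (E : porderZmodType) (phi : V -> E) :
  valuation_system V L E phi ->
  (Pi_extendible L phi <->
   forall (b : V) (a : nat -> V) (x : V) (y : E),
     L b -> phi_convergent L phi a -> is_inf a x ->
     is_inf (fun n => phi (a n)) y -> x <= b -> y <= phi b).
Proof.
move=> [sd sl pg rc [phi_le phi_modular]]; split.
  exact: Pi_extendible_inf_le.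
exact: Pi_extendible_of_inf_le sd sl pg rc phi_le phi_modular.
Qed.
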